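(* Let $B\subseteq\mathbb{R}^n$ be a maximal lattice-free polyhedron with $m$ facets and let $c\in\operatorname{int}(B)$. Let $z_1,\dots,z_m\in\mathbb{Z}^n$ be integer points lying in the relative interiors of the $m$ distinct facets of $B$ (one in each). Then there exists $\epsilon\in(0,1)$ such that for all $i,j\in[m]$ with $i\ne j$, the segment $[z_i,z_j]$ has nonempty intersection with $(1-\epsilon)B+\epsilon c$.
   Context: A set $B\subseteq\mathbb{R}^n$ is lattice-free if it is an $n$-dimensional closed convex set with $\operatorname{int}(B)\cap\mathbb{Z}^n=\emptyset$; it is maximal lattice-free if it is not a proper subset of another lattice-free set. *)

From HB Require Import structures.
From mathcomp Require Import all_boot all_order all_algebra.
From mathcomp Require Import all_classical all_reals all_analysis.
Set Implicit Arguments. Unset Strict Implicit. Unset Printing Implicit Defensive.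
Import Order.TTheory GRing.Theory Num.Theory.
Import numFieldNormedType.Exports.
Local Open Scope classical_set_scope.
Local Open Scope ring_scope.

Section LatticeFree.
Variables (R : realType) (n : nat).
Notation vec := 'rV[R]_n.

Definition dotv (a x : vec) : R := \sum_(j < n) a ord0 j * x ord0 j.

Definition int_pt (x : vec) : Prop := forall j, x ord0 j \is a Num.int.

Definition convex (S : set vec) : Prop :=
  forall x y (t : R), S x -> S y -> 0 <= t <= 1 -> S ((1 - t) *: x + t *: y).

Definition aff_indep (d : nat) (p : 'I_d.+1 -> vec) : Prop :=
  row_free (\matrix_(i < d) (p (lift ord0 i) - p ord0)).

Definition affdim (S : set vec) (d : nat) : Prop :=
  (exists p : 'I_d.+1 -> vec, (forall i, S (p i)) /\ aff_indep p) /\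
  ~ (exists p : 'I_d.+2 -> vec, (forall i, S (p i)) /\ aff_indep p).

Definition aff_hull (S : set vec) : set vec :=
  [set y | exists k (p : 'I_k -> vec) (w : 'I_k -> R),
     (forall i, S (p i)) /\ \sum_(i < k) w i = 1 /\ y = \sum_(i < k) w i *: p i].

Definition relint (S : set vec) : set vec :=
  [set x | S x /\ exists e : R, 0 < e /\
     forall y, aff_hull S y -> `|y - x| < e -> S y].

Definition lattice_free (B : set vec) : Prop :=
  affdim B n /\ closed B /\ convex B /\ (forall x, int_pt x -> ~ (B°) x).

Definition maximal_lattice_free (B : set vec) : Prop :=
  lattice_free B /\ (forall K, lattice_free K -> B `<=` K -> K = B).

Definition polyhedron (B : set vec) : Prop :=
  exists (k : nat) (A : 'M[R]_(k, n)) (b : 'cV[R]_k),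
    B = [set x | forall i, \sum_(j < n) A i j * x ord0 j <= b i ord0].

Definition face (B F : set vec) : Prop :=
  exists (a : vec) (beta : R), (forall x, B x -> dotv a x <= beta) /\
    F = B `&` [set x | dotv a x = beta].

Definition facet (B F : set vec) : Prop :=
  face B F /\ exists d, affdim B d.+1 /\ affdim F d.

End LatticeFree.

From HB Require Import structures.
From mathcomp Require Import all_boot all_order all_algebra.
From mathcomp Require Import all_classical all_reals all_analysis.
From mathcomp Require Import lra.
Import Order.TTheory GRing.Theory Num.Theory.
Import numFieldNormedType.Exports.
Local Open Scope classical_set_scope.
Local Open Scope ring_scope.

(* Write [B = {x | A x <= b}].
   An inequality of the system that is tight at the midpoint of [[z_i, z_j]] is
   tight at [z_i] and [z_j]; as these lie in the relative interiors of their
   facets, it is tight on both facets.  Its hyperplane misses the interior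
   point [c], and a facet contained in a hyperplane missing [c] is the whole
   section of [B] by that hyperplane, so the two facets would coincide.  Hence
   each midpoint is interior to [B], so it lies in [(1 - eps) B + eps c] for
   all small [eps], and finitely many pairs share a common [eps]. *)

Section Polyhedra.
Context {R : realType} {n : nat}.
Local Notation vec := 'rV[R]_n.

Lemma dotv_is_linear (a : vec) : linear (dotv a : vec -> R^o).
Proof.
move=> s x y; rewrite /dotv -[s *: \sum_(j < n) _]/(s * _) mulr_sumr -big_split.
by apply: eq_bigr => j _; rewrite !mxE mulrDr mulrCA.
Qed.

HB.instance Definition _ (a : vec) :=
  GRing.isLinear.Build R vec R^o _ (dotv a) (dotv_is_linear a).

Lemma dotvD (a x y : vec) : dotv a (x + y) = dotv a x + dotv a y.
Proof. exact: linearD. Qed.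

Lemma dotvB (a x y : vec) : dotv a (x - y) = dotv a x - dotv a y.
Proof. exact: linearB. Qed.

Lemma dotvZ (a x : vec) (s : R) : dotv a (s *: x) = s * dotv a x.
Proof. exact: linearZ. Qed.

Lemma dotv0 (a : vec) : dotv a 0 = 0.
Proof. exact: linear0. Qed.

Lemma dotv_sum (a : vec) k (x : 'I_k -> vec) :
  dotv a (\sum_(i < k) x i) = \sum_(i < k) dotv a (x i).
Proof. exact: linear_sum. Qed.

Lemma dotv0l (x : vec) : dotv 0 x = 0.
Proof. by rewrite /dotv big1 // => j _; rewrite mxE mul0r. Qed.

Lemma dotvv_gt0 (a : vec) : a != 0 -> 0 < dotv a a.
Proof.
move=> a_neq0; have sq_ge0 j : 0 <= a ord0 j * a ord0 j by rewrite -expr2 sqr_ge0.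
rewrite lt_def sumr_ge0 ?andbT //; apply: contra a_neq0 => /eqP/psumr_eq0P sq_eq0.
by apply/eqP/rowP => j; apply/eqP; rewrite mxE -sqrf_eq0 expr2 sq_eq0.
Qed.

Lemma dotv_continuous (a : vec) : continuous (dotv a).
Proof.
rewrite /dotv; apply: continuous_big => [|j _ x]; first exact: add_continuous.
exact: cvgMl_tmp (@coord_continuous R 1 n ord0 j x).
Qed.

Lemma cvg_ray (x v : vec) : x + e *: v @[e --> 0^'+] --> x.
Proof.
apply: cvg_at_right_filter; rewrite -[X in _ --> X]addr0 -(scale0r v).
by apply: cvgD; [exact: cvg_cst | apply: cvgZr_tmp; exact: cvg_id].
Qed.

Lemma supporting_interior_eq0 {B : set vec} {a beta c} :
  (forall x, B x -> dotv a x <= beta) -> (B°) c -> dotv a c = beta -> a = 0.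
Proof.
move=> a_le Bc ac; apply/eqP; apply: contraTT isT => a_neq0.
have Bray : \forall e \near 0^'+, B (c + e *: a) := cvg_ray c a B Bc.
have [e [Be e_gt0]] := filter_ex (filterI Bray (nbhs_right_gt 0)).
have := a_le _ Be; rewrite dotvD dotvZ ac gerDl.
by rewrite pmulr_rle0 // leNgt dotvv_gt0.
Qed.

Lemma aff_hull_line (S : set vec) x y t :
  S x -> S y -> aff_hull S ((1 - t) *: x + t *: y).
Proof.
move=> Sx Sy; exists 2%N, (fun i : 'I_2 => if i == ord0 then x else y).
exists (fun i : 'I_2 => if i == ord0 then 1 - t else t).
split; first by move=> i; case: ifP.
by rewrite !big_ord_recl !big_ord0 /= !addr0 subrK.
Qed.

Lemma relint_tight {F : set vec} {z a beta} :
  relint F z -> (forall x, F x -> dotv a x <= beta) -> dotv a z = beta ->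
  forall y, F y -> dotv a y = beta.
Proof.
move=> [Fz [e [e_gt0 Fball]]] a_le az y Fy.
have near_z : \forall t \near 0^'+, `|z + t *: (z - y) - z| < e.
  exact: (cvgr_distC_lt _ _ (cvg_ray z (z - y))).
have [t [zt_near t_gt0]] := filter_ex (filterI near_z (nbhs_right_gt 0)).
have : F (z + t *: (z - y)).
  apply: Fball zt_near.
  have -> : z + t *: (z - y) = (1 - - t) *: z + - t *: y.
    by rewrite opprK scalerDl scale1r scaleNr scalerBr addrA.
  exact: aff_hull_line.
move/a_le; rewrite dotvD dotvZ dotvB az gerDl pmulr_rle0 // subr_le0.
by move=> ay_ge; apply/eqP; rewrite eq_le a_le.
Qed.

Definition extend_pts {k} (p : 'I_k.+1 -> vec) (q : vec) : 'I_k.+2 -> vec :=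
  fun i => if (i < k.+1)%N then p (inord i) else q.

Lemma extend_pts0 {k} (p : 'I_k.+1 -> vec) q : extend_pts p q ord0 = p ord0.
Proof. by rewrite /extend_pts /=; congr p; apply: val_inj; rewrite /= inordK. Qed.

Lemma extend_pts_last {k} (p : 'I_k.+1 -> vec) q :
  extend_pts p q (lift ord0 ord_max) = q.
Proof. by rewrite /extend_pts /= /bump /= ltnn. Qed.

Lemma extend_pts_lift {k} (p : 'I_k.+1 -> vec) q (i : 'I_k) :
  extend_pts p q (lift ord0 (widen_ord (leqnSn k) i)) = p (lift ord0 i).
Proof.
rewrite /extend_pts /= /bump /= add1n ltnS ltn_ord; congr p; apply: val_inj.
by rewrite /= inordK // ltnS.
Qed.

Lemma extend_ptsP (P : vec -> Prop) {k} (p : 'I_k.+1 -> vec) q :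
  (forall i, P (p i)) -> P q -> forall i, P (extend_pts p q i).
Proof. by move=> Pp Pq i; rewrite /extend_pts; case: ifP. Qed.

Lemma aff_indep_extend {k} {p : 'I_k.+1 -> vec} {q a beta} :
  aff_indep p -> (forall i, dotv a (p i) = beta) -> dotv a q != beta ->
  aff_indep (extend_pts p q).
Proof.
move=> p_indep ap aq; apply: inj_row_free => u.
rewrite mulmx_sum_row big_ord_recr /=.
under eq_bigr do rewrite rowK extend_pts_lift.
rewrite rowK extend_pts_last extend_pts0 => u_comb.
have u_last : u 0 ord_max = 0.
  have := congr1 (dotv a) u_comb; rewrite dotv0 dotvD dotvZ dotv_sum.
  rewrite big1; last by move=> i _; rewrite dotvZ dotvB !ap subrr mulr0.
  rewrite add0r dotvB ap => /eqP; rewrite mulf_eq0 subr_eq0 (negbTE aq) orbF.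
  by move/eqP.
pose u' := \row_(i < k) u ord0 (widen_ord (leqnSn k) i).
have : u' *m \matrix_(i < k) (p (lift ord0 i) - p ord0) == 0.
  apply/eqP; rewrite mulmx_sum_row -[RHS]u_comb u_last scale0r addr0.
  by apply: eq_bigr => i _; rewrite rowK mxE.
rewrite mulmx_free_eq0 // => /eqP/rowP u'0; apply/rowP => j; rewrite mxE.
have [j_lt|j_ge] := ltnP j k.
  by have := u'0 (Ordinal j_lt); rewrite !mxE; congr (u _ _ = _); apply: val_inj.
have -> : j = ord_max.
  by apply: val_inj; apply/eqP; rewrite eqn_leq j_ge -ltnS ltn_ord.
exact: u_last.
Qed.

Lemma facet_sub {B F : set vec} : facet B F -> F `<=` B.
Proof. by move=> [[a [beta [_ ->]]] _] x []. Qed.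

(* Otherwise a point of [B] on the hyperplane but off [F], followed by [c],
   extends an affine basis of [F] to too many affinely independent points. *)
Lemma facet_eq_hyperplane {B F : set vec} {a beta c} :
  facet B F -> B c -> dotv a c != beta ->
  F `<=` [set x | dotv a x = beta] -> F = B `&` [set x | dotv a x = beta].
Proof.
move=> BF Bc ac FH; have FB := facet_sub BF.
have [[aF [bF [_ defF]]] [d [[_ dimB] [[p [Fp p_indep]] _]]]] := BF.
apply/seteqP; split => [x Fx | y [By Hy]]; first by split; [apply: FB | apply: FH].
apply: contrapT => Fy; apply: dimB.
have aFp i : dotv aF (p i) = bF by have := Fp i; rewrite defF => -[].
have aFy : dotv aF y != bF by apply/eqP => aFy; apply: Fy; rewrite defF.
have py_indep := aff_indep_extend p_indep aFp aFy.
have apy : forall i, dotv a (extend_pts p y i) = beta.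
  by apply: (extend_ptsP (fun x => dotv a x = beta)) => // i; apply/FH.
exists (extend_pts (extend_pts p y) c); split.
  by do 2![apply: (extend_ptsP B) => //] => i; apply/FB.
exact: aff_indep_extend py_indep apy ac.
Qed.

Lemma interior_shrink {B : set vec} {w} c :
  (B°) w -> \forall e \near 0^'+, exists2 b, B b & w = (1 - e) *: b + e *: c.
Proof.
move=> Bw.
have pre_cvg : (1 - e)^-1 *: (w - e *: c) @[e --> 0^'+] --> w.
  apply: cvg_at_right_filter.
  rewrite [X in _ --> X](_ : w = (1 - 0)^-1 *: (w - 0 *: c)); last first.
    by rewrite subr0 invr1 scale0r subr0 scale1r.
  apply: cvgZ; last by apply: cvgB; [exact: cvg_cst | apply: cvgZr_tmp; exact: cvg_id].
  by apply: cvgV; [rewrite subr0 oner_neq0 | apply: cvgB; [exact: cvg_cst | exact: cvg_id]].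
have near_pre : \forall e \near 0^'+, B ((1 - e)^-1 *: (w - e *: c)) := pre_cvg B Bw.
apply: filterS (filterI near_pre (nbhs_right_lt ltr01)) => e [Bpre e_lt1].
exists ((1 - e)^-1 *: (w - e *: c)) => //.
by rewrite scalerA mulfV ?scale1r ?subrK // subr_eq0 eq_sym lt_eqF.
Qed.

Section Halfspaces.
Context {k : nat} (A : 'M[R]_(k, n)) (b : 'cV[R]_k).

Definition halfspaces : set vec :=
  [set x | forall l, \sum_(j < n) A l j * x ord0 j <= b l ord0].

Lemma halfspacesP x : halfspaces x <-> forall l, dotv (row l A) x <= b l ord0.
Proof.
have row_dotv l : \sum_(j < n) A l j * x ord0 j = dotv (row l A) x.
  by apply: eq_bigr => j _; rewrite mxE.
by split=> Bx l; [rewrite -row_dotv | rewrite row_dotv]; apply: Bx.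
Qed.

Lemma halfspaces_interior w :
  halfspaces w -> (forall l, row l A != 0 -> dotv (row l A) w < b l ord0) ->
  (halfspaces°) w.
Proof.
move=> /halfspacesP Bw w_lt.
have : \forall x \near w, forall l, dotv (row l A) x <= b l ord0.
  apply: (@filter_forall _ _ (fun l x => dotv (row l A) x <= b l ord0) (nbhs w) _).
  move=> l.
  have [a0|a_neq0] := eqVneq (row l A) 0.
    by apply: nearW => x; have := Bw l; rewrite a0 !dotv0l.
  have near_lt : \forall x \near w, dotv (row l A) x < b l ord0.
    exact: (cvgr_lt _ (dotv_continuous (row l A) w) _ (w_lt l a_neq0)).
  by apply: filterS near_lt => x /ltW.
by apply: filterS => x /halfspacesP.
Qed.

Lemma open_segment_facets_interior (F1 F2 : set vec) c z1 z2 t :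
  facet halfspaces F1 -> facet halfspaces F2 -> F1 <> F2 ->
  (halfspaces°) c -> relint F1 z1 -> relint F2 z2 -> 0 < t < 1 ->
  (halfspaces°) ((1 - t) *: z1 + t *: z2).
Proof.
move=> BF1 BF2 F12 Bc rz1 rz2 /andP[t_gt0 t_lt1].
have /halfspacesP Bz1 := facet_sub BF1 _ rz1.1.
have /halfspacesP Bz2 := facet_sub BF2 _ rz2.1.
apply: halfspaces_interior => [|l a_neq0].
  apply/halfspacesP => l; rewrite dotvD !dotvZ.
  by have := Bz1 l; have := Bz2 l; nra.
rewrite ltNge; apply/negP; rewrite dotvD !dotvZ => w_ge.
have az1 : dotv (row l A) z1 = b l ord0 by have := Bz1 l; have := Bz2 l; nra.
have az2 : dotv (row l A) z2 = b l ord0 by have := Bz1 l; have := Bz2 l; nra.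
have B_le x : halfspaces x -> dotv (row l A) x <= b l ord0 by move/halfspacesP.
have ac : dotv (row l A) c != b l ord0.
  apply: contra a_neq0 => /eqP ac.
  by apply/eqP; exact: supporting_interior_eq0 B_le Bc ac.
have F_tight F z : facet halfspaces F -> relint F z ->
    dotv (row l A) z = b l ord0 -> F `<=` [set x | dotv (row l A) x = b l ord0].
  move=> BF rz az y Fy; apply: (relint_tight rz) az y Fy => x Fx.
  exact/B_le/(facet_sub BF).
apply: F12; have Bc' := interior_subset Bc.
rewrite (facet_eq_hyperplane BF1 Bc' ac (F_tight _ _ BF1 rz1 az1)).
by rewrite (facet_eq_hyperplane BF2 Bc' ac (F_tight _ _ BF2 rz2 az2)).
Qed.

End Halfspaces.

End Polyhedra.

Theorem lemma6p1 (R : realType) (n m : nat) (B : set 'rV[R]_n) (c : 'rV[R]_n)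
    (F : 'I_m -> set 'rV[R]_n) (z : 'I_m -> 'rV[R]_n) :
  polyhedron B -> maximal_lattice_free B ->
  injective F -> (forall i, facet B (F i)) ->
  (forall G, facet B G -> exists i, G = F i) ->
  (B°) c ->
  (forall i, int_pt (z i) /\ relint (F i) (z i)) ->
  exists eps : R, 0 < eps < 1 /\
    forall i j : 'I_m, i != j ->
      exists t : R, 0 <= t <= 1 /\
        exists b, B b /\ (1 - t) *: z i + t *: z j = (1 - eps) *: b + eps *: c.
Proof.
move=> [k [A [b ->]]] _ F_inj BF _ Bc zF; rewrite -/(halfspaces A b) in BF Bc *.
pose mid i j := (1 - 2^-1) *: z i + 2^-1 *: z j.
have mid_interior i j : i != j -> ((halfspaces A b)°) (mid i j).
  move=> ij; apply: open_segment_facets_interior (BF i) (BF j) _ Bc _ _ _.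
  - by move/F_inj/eqP; rewrite (negbTE ij).
  - exact: (zF i).2.
  - exact: (zF j).2.
  - by rewrite invr_gt0 invf_lt1 ?ltr0n ?ltr1n.
have near_shrunk : \forall e \near 0^'+, forall i j, i != j ->
    exists2 x, halfspaces A b x & mid i j = (1 - e) *: x + e *: c.
  apply: filter_forall => i; apply: filter_forall => j.
  have [->|ij] := eqVneq i j; first exact: nearW.
  by apply: filterS (interior_shrink c (mid_interior i j ij)) => e shrunk _.
have [e [[shrunk e_gt0] e_lt1]] :=
  filter_ex (filterI (filterI near_shrunk (nbhs_right_gt 0)) (nbhs_right_lt ltr01)).
exists e; split; first by rewrite e_gt0 e_lt1.
move=> i j ij; exists 2^-1; split.
  by rewrite invr_ge0 ler0n invf_le1 ?ler1n ?ltr0n.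
by have [x Bx mid_eq] := shrunk i j ij; exists x.
Qed.
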